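(* For every positive integer $n$, $$|S_n(123,132,3241)|=|S_n(132,213,2341)|=f_{n+2}-1,$$ where $f_n$ is the $n$-th Fibonacci number ($f_1=f_2=1$, $f_n=f_{n-1}+f_{n-2}$).
   Context: Permutations are written in one-line notation. A permutation $\sigma\in S_n$ contains $\pi\in S_m$ if there are indices $i_1<\dots<i_m$ such that for all $j<l$, $\sigma_{i_j}<\sigma_{i_l}$ iff $\pi_j<\pi_l$; otherwise $\sigma$ avoids $\pi$. $S_n(\pi^{(1)},\dots,\pi^{(r)})$ is the set of permutations in $S_n$ avoiding all the listed patterns. *)

From mathcomp Require Import all_boot all_fingroup.
Set Implicit Arguments. Unset Strict Implicit. Unset Printing Implicit Defensive.

(* A permutation sigma in S_n is a {perm 'I_n}; its one-line notation is
   sigma 0, sigma 1, ..., sigma (n-1) (values shifted to 0..n-1).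
   A pattern pi is given by its one-line notation as a sequence of naturals
   (e.g. [:: 1; 2; 3] for 123); only the relative order of entries matters. *)

Definition contains (n : nat) (sigma : {perm 'I_n}) (pi : seq nat) : bool :=
  [exists f : {ffun 'I_(size pi) -> 'I_n},
     [forall j : 'I_(size pi), forall l : 'I_(size pi),
        (j < l)%N ==>
          ((f j < f l)%N &&
           ((sigma (f j) < sigma (f l))%N == (nth 0 pi j < nth 0 pi l)%N))]].

Definition avoids (n : nat) (sigma : {perm 'I_n}) (pi : seq nat) : bool :=
  ~~ contains sigma pi.

Definition Av (n : nat) (pats : seq (seq nat)) : {set {perm 'I_n}} :=
  [set sigma : {perm 'I_n} | all (avoids sigma) pats].

Fixpoint fib (k : nat) : nat :=
  match k with
  | 0 => 0
  | 1 => 1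
  | (k'.+1 as k1).+1 => fib k1 + fib k'
  end.

(* Both classes obey the same recursive description.  For n >= 3, a
   permutation of {0, ..., n-1} avoiding the patterns is either n-1 followed
   by such a permutation of length n-1, or n-2, n-1 followed by one of length
   n-2, or a single exceptional permutation: (n-2)(n-3)...0(n-1) for
   {123, 132, 3241}, the identity for {132, 213, 2341}.  Prepending entries
   above all others cannot create an occurrence, since no pattern begins with
   its maximum or with its two largest entries in increasing order; the
   converse is a case analysis on the position of n-1.  Hence the counts
   satisfy a_n = a_(n-1) + a_(n-2) + 1 with a_1 = 1 and a_2 = 2, so that
   a_n = f_(n+2) - 1.  Occurrences are handled on one-line notations, as
   subsequences order-isomorphic to the pattern. *)

From mathcomp Require Import all_boot all_fingroup.
From mathcomp Require Import zify.
Set Implicit Arguments. Unset Strict Implicit. Unset Printing Implicit Defensive.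

Definition order_iso (t p : seq nat) : bool :=
  (size t == size p) &&
  pairwise (fun x y : nat * nat => (x.1 < y.1) == (x.2 < y.2)) (zip t p).

Definition occurs (p s : seq nat) : Prop := exists2 t, subseq t s & order_iso t p.

Definition avoids_all (pats : seq (seq nat)) (s : seq nat) : Prop :=
  forall p, p \in pats -> ~ occurs p s.

Lemma order_isoP t p :
  reflect (size t = size p /\
           forall i j, i < j < size p ->
             (nth 0 t i < nth 0 t j) = (nth 0 p i < nth 0 p j))
          (order_iso t p).
Proof.
rewrite /order_iso; case: eqP => [eq_sz|]; last by right; case.
apply: (iffP (pairwiseP (0, 0))); rewrite size_zip eq_sz minnn.
- move=> iso; split=> // i j /andP [lt_ij lt_j].
  by have /eqP := iso i j (ltn_trans lt_ij lt_j) lt_j lt_ij; rewrite !nth_zip.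
- by case=> _ iso i j lt_i lt_j lt_ij; rewrite !nth_zip //=; apply/eqP/iso/andP.
Qed.

Lemma size_order_iso t p : order_iso t p -> size t = size p.
Proof. by case/andP => /eqP. Qed.

Lemma subseq_nthP (T : eqType) (x0 : T) (t s : seq T) :
  reflect (exists I, [/\ sorted ltn I, all (gtn (size s)) I & t = map (nth x0 s) I])
          (subseq t s).
Proof.
apply: (iffP idP) => [/subseqP [m _ ->] | [I [sorted_I lt_I ->]]].
  exists (mask m (iota 0 (size s))); split.
  - exact: (subseq_sorted (leT := ltn) ltn_trans (mask_subseq _ _) (iota_ltn_sorted _ _)).
  - by apply/all_mask/allP => i; rewrite mem_iota.
  - by rewrite map_mask -/(mkseq _ _) mkseq_nth.
rewrite -[s in subseq _ s](mkseq_nth x0); apply: map_subseq.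
apply/(subseq_uniqP (iota_uniq 0 _)).
apply: (irr_sorted_eq (leT := ltn) ltn_trans ltnn) => //.
  exact: (subseq_sorted (leT := ltn) ltn_trans) (filter_subseq _ _) (iota_ltn_sorted _ _).
by move=> i; rewrite mem_filter mem_iota andb_idr //= => /(allP lt_I).
Qed.

Lemma subseq_consP (T : eqType) (x : T) t s :
  subseq t (x :: s) -> subseq t s \/ exists2 u, t = x :: u & subseq u s.
Proof.
case: t => [|y u] /=; first by left; exact: sub0seq.
by case: eqP => [<- | _]; [right; exists u | left].
Qed.

Lemma subseq_rcons2 (T : eqType) (x y : T) t s :
  subseq (rcons t x) (rcons s y) -> subseq t s.
Proof.
rewrite -[subseq t s]subseq_rev -subseq_rev !rev_rcons /=.
by case: eqP => _ // /cons_subseq.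
Qed.

Lemma all_subseq (T : eqType) (a : pred T) t s : subseq t s -> all a s -> all a t.
Proof. by move=> sub_ts /allP a_s; apply/allP => x /(mem_subseq sub_ts) /a_s. Qed.

Lemma occurs_subseq p t s : subseq t s -> occurs p t -> occurs p s.
Proof. by move=> sub_ts [u sub_ut iso]; exists u => //; exact: subseq_trans sub_ts. Qed.

Lemma occurs_size p s : occurs p s -> size p <= size s.
Proof. by case=> t /size_subseq le_ts /size_order_iso <-. Qed.

Lemma occurs_rcons_max p c u m : all (gtn c) p -> all (gtn m) u ->
  occurs p u -> occurs (rcons p c) (rcons u m).
Proof.
move=> lt_p lt_u [t sub_t iso]; exists (rcons t m); first by rewrite -!cats1 cat_subseq.
have lt_t := all_subseq sub_t lt_u; have size_t := size_order_iso iso.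
rewrite /order_iso !size_rcons size_t eqxx zip_rcons // pairwise_rcons.
case/andP: iso => _ ->; rewrite andbT; apply/allP => -[a b] ab_zip /=.
have a_t : a \in t by rewrite -(unzip1_zip (eq_leq size_t)) (map_f fst ab_zip).
have b_p : b \in p by rewrite -(unzip2_zip (eq_leq (esym size_t))) (map_f snd ab_zip).
by move: (allP lt_t a a_t) (allP lt_p b b_p) => /= -> ->.
Qed.

Lemma order_iso_head_max x u t p : order_iso (x :: u ++ t) p -> all (gtn x) t ->
  ~~ has (ltn (head 0 p)) (drop (size u).+1 p).
Proof.
case/order_isoP => size_p iso lt_t; apply/hasPn => _ /(nthP 0) [j lt_j <-].
rewrite size_drop in lt_j; rewrite nth_drop -leqNgt.
have lt_tj : nth 0 t j < x.
  apply: (allP lt_t); rewrite mem_nth //; move: size_p lt_j; rewrite /= size_cat; lia.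
case: p size_p iso lt_j => [|p0 p] //= _ iso lt_j.
have := iso 0 ((size u).+1 + j); rewrite /= addSn nth_cat ifN ?addKn; last first.
  by rewrite -leqNgt leq_addr.
by move=> iso_j; rewrite leqNgt -iso_j; [rewrite -leqNgt ltnW | lia].
Qed.

Lemma occurs_cons_max p x s : has (ltn (head 0 p)) (behead p) -> all (gtn x) s ->
  occurs p (x :: s) <-> occurs p s.
Proof.
move=> head_p lt_s; split; last exact: occurs_subseq (subseq_cons s x).
case=> t /subseq_consP [sub_t iso | [u -> sub_u] iso]; first by exists t.
have := order_iso_head_max (u := [::]) iso (all_subseq sub_u lt_s).
by rewrite drop1 head_p.
Qed.

Lemma occurs_cons_top2 p x s :
  has (ltn (head 0 p)) (behead p) ->
  (nth 0 p 1 < head 0 p) || has (ltn (head 0 p)) (drop 2 p) ->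
  all (gtn x) s -> occurs p [:: x, x.+1 & s] <-> occurs p s.
Proof.
move=> head_p head2_p lt_s.
split; last exact: occurs_subseq (suffix_subseq [:: x; x.+1] s).
case=> t /subseq_consP [sub_t | [u -> /subseq_consP [sub_u | [v -> sub_v]]]] iso.
- have lt_s1 : all (gtn x.+1) s by apply: sub_all lt_s => y /ltnW.
  by apply/(occurs_cons_max head_p lt_s1); exists t.
- have := order_iso_head_max (u := [::]) iso (all_subseq sub_u lt_s).
  by rewrite drop1 head_p.
- have := order_iso_head_max (u := [:: x.+1]) iso (all_subseq sub_v lt_s).
  case/order_isoP: iso => size_p iso.
  case: p size_p iso head2_p {head_p} => [|p0 [|p1 p]] //= _ iso.
  have := iso 0 1 isT; rewrite /= ltnSn drop0 => lt01 /orP [lt10 _ | -> //].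
  by move: lt10; rewrite ltnNge ltnW // -lt01.
Qed.

Lemma pairwise_avoid2 a b s :
  ~ occurs [:: a; b] s -> pairwise (fun x y => (x < y) != (a < b)) s.
Proof.
elim: s => //= x s IH av; apply/andP; split.
  apply/allP => y y_s; apply/negP => /eqP eq_xy; apply: av.
  by exists [:: x; y]; rewrite /= ?eqxx ?sub1seq // /order_iso /= eq_xy eqxx.
by apply: IH => occ; apply: av; exact: occurs_subseq (subseq_cons s x) occ.
Qed.

Lemma iota0S n : iota 0 n.+1 = rcons (iota 0 n) n.
Proof. by rewrite -addn1 iotaD cats1. Qed.

Lemma mem_perm_iota n s : perm_eq s (iota 0 n) -> forall x, (x \in s) = (x < n).
Proof. by move=> perm_s x; rewrite (perm_mem perm_s) mem_iota. Qed.

Lemma all_perm_iota n s : perm_eq s (iota 0 n) -> all (gtn n) s.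
Proof. by move=> perm_s; apply/allP => x; rewrite (mem_perm_iota perm_s). Qed.

Lemma perm_iota_cat_max n u w :
  perm_eq (u ++ n :: w) (iota 0 n.+1) = perm_eq (u ++ w) (iota 0 n).
Proof.
by rewrite -cat1s perm_catCA iota0S perm_sym perm_rcons perm_cons perm_sym.
Qed.

Lemma perm_iota_cons_max n t : perm_eq (n :: t) (iota 0 n.+1) = perm_eq t (iota 0 n).
Proof. exact: perm_iota_cat_max [::] t. Qed.

Lemma perm_iota_rcons_max n t : perm_eq (rcons t n) (iota 0 n.+1) = perm_eq t (iota 0 n).
Proof. by rewrite -cats1 perm_iota_cat_max cats0. Qed.

Lemma perm_iota_cons_top2 n t :
  perm_eq [:: n, n.+1 & t] (iota 0 n.+2) = perm_eq t (iota 0 n).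
Proof. by rewrite (perm_iota_cat_max _ [:: n]) !perm_iota_cons_max. Qed.

Lemma perm_iota_split_max k s : perm_eq s (iota 0 k.+1) ->
  (exists t, s = k :: t) \/
  exists x u w, [/\ s = x :: u ++ k :: w, x < k & perm_eq (x :: u ++ w) (iota 0 k)].
Proof.
case: s => [/perm_size // | x t] perm_s.
case: (ltngtP x k) => [lt_x | gt_x | ->]; last by left; exists t.
  have k_t : k \in t by have := mem_perm_iota perm_s k; rewrite inE ltnSn (gtn_eqF lt_x).
  move: perm_s; case/splitPr: k_t => u w perm_s; right; exists x, u, w; split=> //.
  by move: perm_s; rewrite -cat_cons perm_iota_cat_max.
by have := mem_perm_iota perm_s x; rewrite mem_head ltnS leqNgt gt_x.
Qed.

Lemma avoid12_rev_iota k s :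
  perm_eq s (iota 0 k) -> ~ occurs [:: 1; 2] s -> s = rev (iota 0 k).
Proof.
move=> perm_s av.
have geq_trans : transitive geq.
  by move=> y x z /= le_yx le_zy; exact: leq_trans le_zy le_yx.
apply: (sorted_eq geq_trans).
- by move=> x y /andP [le_yx le_xy]; apply/anti_leq/andP.
- by rewrite sorted_pairwise //; apply: sub_pairwise (pairwise_avoid2 av) => x y /=; lia.
- by rewrite rev_sorted; exact: iota_sorted.
- by rewrite perm_sym perm_rev perm_sym.
Qed.

Lemma avoid21_iota k s :
  perm_eq s (iota 0 k) -> ~ occurs [:: 2; 1] s -> s = iota 0 k.
Proof.
move=> perm_s av; apply: (sorted_eq leq_trans anti_leq) => //; last exact: iota_sorted.
rewrite (sorted_pairwise leq_trans).
by apply: sub_pairwise (pairwise_avoid2 av) => x y /=; lia.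
Qed.

Definition oneline n (s : {perm 'I_n}) : seq nat := [seq val (s i) | i <- enum 'I_n].

Lemma size_oneline n (s : {perm 'I_n}) : size (oneline s) = n.
Proof. by rewrite size_map size_enum_ord. Qed.

Lemma nth_map_enum_ord (T : Type) (x0 : T) m (g : 'I_m -> T) (i : 'I_m) :
  nth x0 [seq g j | j <- enum 'I_m] i = g i.
Proof. by rewrite (nth_map i) ?size_enum_ord // nth_ord_enum. Qed.

Lemma nth_oneline n (s : {perm 'I_n}) (i : 'I_n) : nth 0 (oneline s) i = s i.
Proof. exact: nth_map_enum_ord. Qed.

Lemma contains_occurs n (s : {perm 'I_n}) p :
  reflect (occurs p (oneline s)) (contains s p).
Proof.
apply: (iffP existsP) => [[f /forallP f_occ] | ].
  have occ_f (i j : 'I_(size p)) :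
      i < j -> f i < f j /\ (s (f i) < s (f j)) = (nth 0 p i < nth 0 p j).
    by move=> lt_ij; case/andP: (implyP (forallP (f_occ i) j) lt_ij) => ? /eqP.
  exists [seq val (s (f j)) | j <- enum 'I_(size p)].
    apply/(subseq_nthP 0); exists [seq val (f j) | j <- enum 'I_(size p)]; split.
    - rewrite (sorted_pairwise ltn_trans) pairwise_map.
      apply: sub_pairwise (fun i j lt_ij => (occ_f i j lt_ij).1) _.
      rewrite -(pairwise_map val ltn) val_enum_ord -(sorted_pairwise ltn_trans).
      exact: iota_ltn_sorted.
    - by apply/allP => _ /mapP [j _ ->]; rewrite /= size_oneline.
    - by rewrite -map_comp; apply: eq_map => j /=; rewrite nth_oneline.
  apply/order_isoP; rewrite size_map size_enum_ord; split=> // i j /andP [lt_ij lt_j].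
  have lt_i := ltn_trans lt_ij lt_j.
  have -> : i = Ordinal lt_i by []; have -> : j = Ordinal lt_j by [].
  by rewrite !nth_map_enum_ord (occ_f (Ordinal lt_i) (Ordinal lt_j) lt_ij).2.
case=> t /(subseq_nthP 0) [I [sorted_I lt_I ->]] /order_isoP [size_I iso].
rewrite size_map in size_I.
have lt_In (j : 'I_(size p)) : nth 0 I j < n.
  by rewrite -(size_oneline s); apply: (allP lt_I); rewrite mem_nth ?size_I.
exists [ffun j => Ordinal (lt_In j)].
apply/forallP => j; apply/forallP => l; apply/implyP => lt_jl; rewrite !ffunE /=.
rewrite (sorted_ltn_nth ltn_trans) ?inE ?size_I //=.
rewrite -!(nth_oneline s (Ordinal _)) /= -!(nth_map 0 0 (nth 0 (oneline s))) ?size_I //.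
by rewrite iso ?lt_jl /=.
Qed.

Lemma oneline_inj n : injective (@oneline n).
Proof.
by move=> s1 s2 eq_s; apply/permP => i; apply: val_inj; rewrite /= -!nth_oneline eq_s.
Qed.

Lemma perm_iota_oneline n (s : {perm 'I_n}) : perm_eq (oneline s) (iota 0 n).
Proof.
have -> : oneline s = map val (map s (enum 'I_n)) by rewrite -map_comp.
rewrite -val_enum_ord perm_map // uniq_perm ?enum_uniq //.
  by rewrite map_inj_uniq ?enum_uniq //; exact: perm_inj.
by move=> i; rewrite mem_enum -[i](permKV s) map_f ?mem_enum.
Qed.

Lemma oneline_onto n t : perm_eq t (iota 0 n) -> exists s : {perm 'I_n}, oneline s = t.
Proof.
move=> perm_t; have uniq_t : uniq t by rewrite (perm_uniq perm_t) iota_uniq.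
have size_t : size t = n by rewrite (perm_size perm_t) size_iota.
have lt_t (i : 'I_n) : nth 0 t i < n by rewrite -(mem_perm_iota perm_t) mem_nth ?size_t.
pose f (i : 'I_n) := Ordinal (lt_t i).
have inj_f : injective f.
  by move=> i j /(congr1 val) /eqP; rewrite /= nth_uniq ?size_t // => /eqP /val_inj.
exists (perm inj_f); rewrite -[RHS](mkseq_nth 0) size_t /mkseq -val_enum_ord -map_comp.
by apply: eq_map => i; rewrite /= permE.
Qed.

Lemma mem_Av n pats (s : {perm 'I_n}) :
  s \in Av n pats <-> avoids_all pats (oneline s).
Proof.
rewrite inE; split=> [/allP av p /av /contains_occurs // | av].
by apply/allP => p /av occ; apply/contains_occurs.
Qed.

Lemma card_Av n pats (ss : seq (seq nat)) : uniq ss ->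
  (forall t, t \in ss <-> perm_eq t (iota 0 n) /\ avoids_all pats t) ->
  #|Av n pats| = size ss.
Proof.
move=> uniq_ss mem_ss; rewrite cardE -(size_map (@oneline n)); apply: perm_size.
apply: uniq_perm => //; first by rewrite map_inj_uniq ?enum_uniq //; exact: oneline_inj.
move=> t; apply/mapP/idP => [[s] | /mem_ss [perm_t av]].
  rewrite mem_enum => /mem_Av av ->.
  by apply/mem_ss; split=> //; exact: perm_iota_oneline.
have [s eq_s] := oneline_onto perm_t.
by exists s; rewrite // mem_enum; apply/mem_Av; rewrite eq_s.
Qed.

(* The exceptional member of length k.+1 is [rcons (q k) k]; for k = 1 it is
   omitted, since [:: 0; 1] is already listed. *)
Fixpoint fib_class (q : nat -> seq nat) (n : nat) : seq (seq nat) :=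
  match n with
  | 0 => [:: [::]]
  | 1 => [:: [:: 0]]
  | (k.+1 as k1).+1 =>
      [seq k1 :: t | t <- fib_class q k1] ++ [seq [:: k, k1 & t] | t <- fib_class q k] ++
      (if k is 0 then [::] else [:: rcons (q k1) k1])
  end.

Lemma fib_classSS q k : fib_class q k.+2 =
  [seq k.+1 :: t | t <- fib_class q k.+1] ++ [seq [:: k, k.+1 & t] | t <- fib_class q k] ++
  (if k is 0 then [::] else [:: rcons (q k.+1) k.+1]).
Proof. by []. Qed.

Lemma size_fib_class q n : (size (fib_class q n.+1)).+1 = fib n.+3.
Proof.
elim/ltn_ind: n => -[|[|n]] IH //.
have -> : fib n.+4.+1 = fib n.+4 + fib n.+3 by [].
rewrite fib_classSS !size_cat !size_map -(IH n.+1) // -(IH n) // [size [:: _]]/=; lia.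
Qed.

Section FibonacciClass.

Variables (pats : seq (seq nat)) (q : nat -> seq nat).

Hypothesis perm_q : forall k, perm_eq (q k) (iota 0 k).

Lemma uniq_fib_class n : uniq (fib_class q n).
Proof.
elim/ltn_ind: n => -[|[|k]] IH //.
have inj1 : injective (cons k.+1) by move=> ? ? [].
have inj2 : injective (fun t => [:: k, k.+1 & t]) by move=> ? ? [].
rewrite fib_classSS !cat_uniq !map_inj_uniq ?IH // has_cat negb_or /=.
have -> : ~~ has (mem [seq k.+1 :: t | t <- fib_class q k.+1])
                 [seq [:: k, k.+1 & t] | t <- fib_class q k].
  by apply/hasPn => _ /mapP [t _ ->]; apply/mapP => -[u _ [/eqP]]; lia.
case: k {IH inj1 inj2} => [|k] //=; rewrite !orbF !andbT.
have size_q : size (q k.+2) = k.+2 by rewrite (perm_size (perm_q _)) size_iota.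
have lt_q i : i < k.+2 -> nth 0 (rcons (q k.+2) k.+2) i < k.+2.
  by move=> lt_i; rewrite nth_rcons size_q lt_i -(mem_perm_iota (perm_q _)) mem_nth ?size_q.
apply/andP; split; apply/mapP => -[t _ eq_t].
  by have := lt_q 0 isT; rewrite eq_t ltnn.
by have := lt_q 1 isT; rewrite eq_t ltnn.
Qed.

Hypothesis pats_head : forall p, p \in pats -> has (ltn (head 0 p)) (behead p).
Hypothesis pats_head2 : forall p, p \in pats ->
  (nth 0 p 1 < head 0 p) || has (ltn (head 0 p)) (drop 2 p).
Hypothesis avoids_special : forall k, 0 < k -> avoids_all pats (rcons (q k.+1) k.+1).
Hypothesis decompose : forall k s, perm_eq s (iota 0 k.+2) -> avoids_all pats s ->
  [\/ exists t, s = k.+1 :: t, exists t, s = [:: k, k.+1 & t]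
    | 0 < k /\ s = rcons (q k.+1) k.+1].

Lemma avoids_small s : size s <= 1 -> avoids_all pats s.
Proof.
move=> small_s p /pats_head; case: p => [|p0 [|p1 p]] //= _ /occurs_size /=.
by rewrite ltnNge (leq_trans small_s).
Qed.

Lemma avoids_cons_max x s : all (gtn x) s ->
  avoids_all pats (x :: s) <-> avoids_all pats s.
Proof.
move=> lt_s; split=> av p p_in occ; apply: (av p p_in).
  by apply/(occurs_cons_max (pats_head p_in) lt_s).
by apply/(occurs_cons_max (pats_head p_in) lt_s).
Qed.

Lemma avoids_cons_top2 x s : all (gtn x) s ->
  avoids_all pats [:: x, x.+1 & s] <-> avoids_all pats s.
Proof.
move=> lt_s; split=> av p p_in occ; apply: (av p p_in).
  by apply/(occurs_cons_top2 (pats_head p_in) (pats_head2 p_in) lt_s).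
by apply/(occurs_cons_top2 (pats_head p_in) (pats_head2 p_in) lt_s).
Qed.

Lemma mem_fib_class n s :
  s \in fib_class q n <-> perm_eq s (iota 0 n) /\ avoids_all pats s.
Proof.
elim/ltn_ind: n s => -[|[|k]] IH s.
- rewrite inE; split=> [/eqP -> | [/perm_nilP -> _] //].
  by split; [exact: perm_refl | exact: avoids_small].
- rewrite inE; split=> [/eqP -> | [/(perm_small_eq (isT : size (iota 0 1) <= 1)) -> _] //].
  by split; [exact: perm_refl | exact: avoids_small].
rewrite fib_classSS !mem_cat; split.
  case/or3P => [/mapP [t /IH [] // perm_t av_t ->] | /mapP [t /IH [] // perm_t av_t ->] | ].
  - rewrite perm_iota_cons_max; split=> //.
    by apply/avoids_cons_max => //; exact: all_perm_iota perm_t.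
  - rewrite perm_iota_cons_top2; split=> //.
    by apply/avoids_cons_top2 => //; exact: all_perm_iota perm_t.
  - case: k {IH} => // k; rewrite inE => /eqP ->.
    by rewrite perm_iota_rcons_max; split; [exact: perm_q | exact: avoids_special].
case=> perm_s av; case: (decompose perm_s av) => [[t eq_s] | [t eq_s] | [k_gt0 ->]].
- rewrite eq_s map_f //; apply/IH => //; rewrite eq_s perm_iota_cons_max in perm_s.
  by split=> //; apply/(avoids_cons_max (all_perm_iota perm_s)); rewrite -eq_s.
- rewrite eq_s map_f ?orbT //; apply/IH => //; rewrite eq_s perm_iota_cons_top2 in perm_s.
  by split=> //; apply/(avoids_cons_top2 (all_perm_iota perm_s)); rewrite -eq_s.
- by case: k k_gt0 {IH perm_s av} => // k _; rewrite mem_seq1 eqxx !orbT.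
Qed.

Lemma card_Av_fib n : #|Av n.+1 pats| = (fib n.+3).-1.
Proof.
by rewrite (card_Av (uniq_fib_class n.+1) (mem_fib_class n.+1)) -(size_fib_class q).
Qed.

End FibonacciClass.

Lemma avoids_123_132_3241_special k :
  avoids_all [:: [:: 1; 2; 3]; [:: 1; 3; 2]; [:: 3; 2; 4; 1]] (rcons (rev (iota 0 k)) k).
Proof.
have dec t x : subseq (rcons t x) (rcons (rev (iota 0 k)) k) -> sorted ltn (rev t).
  move/subseq_rcons2; rewrite -subseq_rev revK => /subseq_sorted; apply.
    exact: ltn_trans.
  exact: iota_ltn_sorted.
move=> p; rewrite !inE => /or3P [] /eqP -> [t sub iso]; have := size_order_iso iso.
- case: t sub iso => [|a [|b [|c []]]] // /(dec [:: a; b]) /= ? iso _.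
  by move: iso; rewrite /order_iso /=; lia.
- case: t sub iso => [|a [|b [|c []]]] // /(dec [:: a; b]) /= ? iso _.
  by move: iso; rewrite /order_iso /=; lia.
- case: t sub iso => [|a [|b [|c [|d []]]]] // /(dec [:: a; b; c]) /= ? iso _.
  by move: iso; rewrite /order_iso /=; lia.
Qed.

Lemma decompose_123_132_3241 k s : perm_eq s (iota 0 k.+2) ->
  ~ occurs [:: 1; 2; 3] s -> ~ occurs [:: 1; 3; 2] s -> ~ occurs [:: 3; 2; 4; 1] s ->
  [\/ exists t, s = k.+1 :: t, exists t, s = [:: k, k.+1 & t]
    | 0 < k /\ s = rcons (rev (iota 0 k.+1)) k.+1].
Proof.
move=> perm_s no123 no132 no3241.
case/perm_iota_split_max: perm_s => [[t ->] | [x [u [w [eq_s lt_x perm_xuw]]]]].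
  by constructor 1; exists t.
subst s.
have eq_x : x = k.
  case: (eqVneq x k) => // ne_xk; exfalso.
  have : k \in u ++ w.
    by have := mem_perm_iota perm_xuw k; rewrite inE eq_sym (negbTE ne_xk) ltnSn.
  rewrite mem_cat => /orP [k_u | k_w].
    apply: no123; exists [:: x; k; k.+1]; last by rewrite /order_iso /=; lia.
    by rewrite /= eqxx (cat_subseq (s1 := [:: k])) ?sub1seq ?mem_head.
  apply: no132; exists [:: x; k.+1; k]; last by rewrite /order_iso /=; lia.
  by rewrite /= eqxx (cat_subseq (sub0seq u)) //= eqxx sub1seq.
subst x; rewrite perm_iota_cons_max in perm_xuw; have lt_uw := mem_perm_iota perm_xuw.
case: u => [|y u] in no123 no132 no3241 perm_xuw lt_uw *.
  by constructor 2; exists w.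
have w_nil : w = [::].
  case: w => [|z w] // in no123 no132 no3241 perm_xuw lt_uw *; exfalso.
  have lt_y : y < k by rewrite -lt_uw mem_head.
  have lt_z : z < k by rewrite -lt_uw mem_cat mem_head orbT.
  have sub_yk1z : subseq [:: y; k.+1; z] ((y :: u) ++ [:: k.+1, z & w]).
    by rewrite (cat_subseq (s1 := [:: y])) ?sub1seq ?mem_head //= !eqxx sub0seq.
  case: (ltngtP y z) => [lt_yz | lt_zy | eq_yz].
  - apply: no132; exists [:: y; k.+1; z]; last by rewrite /order_iso /=; lia.
    exact: subseq_trans sub_yk1z (subseq_cons _ k).
  - apply: no3241; exists [:: k; y; k.+1; z]; last by rewrite /order_iso /=; lia.
    by rewrite /= eqxx.
  - by have := perm_uniq perm_xuw; rewrite iota_uniq eq_yz /= mem_cat mem_head orbT.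
subst w; rewrite cats0 in perm_xuw.
have dec_yu : y :: u = rev (iota 0 k).
  apply: (avoid12_rev_iota perm_xuw) => occ; apply: no123.
  apply: occurs_subseq (occurs_rcons_max (c := 3) (m := k.+1) _ _ occ) => //.
    by rewrite -cats1 subseq_cons.
  by apply: sub_all (all_perm_iota perm_xuw) => y' /ltnW.
constructor 3; split; last by rewrite iota0S rev_rcons -dec_yu cats1.
by rewrite -(size_iota 0 k) -(perm_size perm_xuw).
Qed.

Lemma avoids_132_213_2341_special k :
  avoids_all [:: [:: 1; 3; 2]; [:: 2; 1; 3]; [:: 2; 3; 4; 1]] (iota 0 k).
Proof.
have inc t : subseq t (iota 0 k) -> sorted ltn t.
  by move/subseq_sorted; apply; [exact: ltn_trans | exact: iota_ltn_sorted].
move=> p; rewrite !inE => /or3P [] /eqP -> [t /inc + iso]; have := size_order_iso iso.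
- case: t iso => [|a [|b [|c []]]] // iso _ /=; move: iso; rewrite /order_iso /=; lia.
- case: t iso => [|a [|b [|c []]]] // iso _ /=; move: iso; rewrite /order_iso /=; lia.
- case: t iso => [|a [|b [|c [|d []]]]] // iso _ /=; move: iso; rewrite /order_iso /=; lia.
Qed.

Lemma decompose_132_213_2341 k s : perm_eq s (iota 0 k.+2) ->
  ~ occurs [:: 1; 3; 2] s -> ~ occurs [:: 2; 1; 3] s -> ~ occurs [:: 2; 3; 4; 1] s ->
  [\/ exists t, s = k.+1 :: t, exists t, s = [:: k, k.+1 & t]
    | 0 < k /\ s = rcons (iota 0 k.+1) k.+1].
Proof.
move=> perm_s no132 no213 no2341.
case/perm_iota_split_max: perm_s => [[t ->] | [x [u [w [eq_s lt_x perm_xuw]]]]].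
  by constructor 1; exists t.
subst s.
have lt_xuw := mem_perm_iota perm_xuw.
case: u => [|y u] in no132 no213 no2341 perm_xuw lt_xuw *.
  have -> : x = k; last by constructor 2; exists w.
  case: (ltngtP x k) => // [lt_xk | ]; last by lia.
  exfalso; have k_w : k \in w by have := lt_xuw k; rewrite inE ltnSn (gtn_eqF lt_xk).
  apply: no132; exists [:: x; k.+1; k]; last by rewrite /order_iso /=; lia.
  by rewrite /= !eqxx sub1seq.
have lt_y : y < k.+1 by rewrite -lt_xuw !inE eqxx orbT.
have uniq_xuw := perm_uniq perm_xuw; rewrite iota_uniq in uniq_xuw.
have lt_xy : x < y.
  case: (ltngtP x y) => // [lt_yx | eq_xy]; exfalso.
    apply: no213; exists [:: x; y; k.+1]; last by rewrite /order_iso /=; lia.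
    by rewrite /= eqxx /= eqxx sub1seq mem_cat mem_head orbT.
  by move: uniq_xuw; rewrite eq_xy /= mem_head.
have w_nil : w = [::].
  case: w => [|z w] // in no132 no213 no2341 perm_xuw lt_xuw uniq_xuw *; exfalso.
  have lt_z : z < k.+1 by rewrite -lt_xuw !(inE, mem_cat) eqxx !orbT.
  have sub_k1z : subseq [:: k.+1; z] (u ++ [:: k.+1, z & w]).
    by rewrite (cat_subseq (sub0seq u)) //= !eqxx sub0seq.
  case: (ltngtP x z) => [lt_xz | lt_zx | eq_xz].
  - apply: no132; exists [:: x; k.+1; z]; last by rewrite /order_iso /=; lia.
    by rewrite /= eqxx; apply: subseq_trans sub_k1z (subseq_cons _ y).
  - apply: no2341; exists [:: x; y; k.+1; z]; last by rewrite /order_iso /=; lia.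
    by rewrite /= eqxx /= eqxx.
  - by move: uniq_xuw; rewrite eq_xz /= !(inE, mem_cat) eqxx !orbT.
subst w; rewrite cats0 in perm_xuw.
have inc_xyu : [:: x, y & u] = iota 0 k.+1.
  apply: (avoid21_iota perm_xuw) => occ; apply: no213; rewrite cats1.
  exact: (occurs_rcons_max (c := 3) _ (all_perm_iota perm_xuw) occ).
constructor 3; split; last by rewrite -inc_xyu cats1.
by have := perm_size perm_xuw; rewrite size_iota /=; lia.
Qed.

Lemma card_Av_123_132_3241 n :
  #|Av n.+1 [:: [:: 1; 2; 3]; [:: 1; 3; 2]; [:: 3; 2; 4; 1]]| = (fib n.+3).-1.
Proof.
apply: (card_Av_fib (q := fun k => rev (iota 0 k))).
- by move=> k; rewrite perm_rev.
- by move=> p; rewrite !inE => /or3P [] /eqP ->.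
- by move=> p; rewrite !inE => /or3P [] /eqP ->.
- by move=> k _; exact: avoids_123_132_3241_special.
- move=> k s perm_s av; apply: decompose_123_132_3241 perm_s (av _ _) (av _ _) (av _ _).
  all: by rewrite !inE eqxx ?orbT.
Qed.

Lemma card_Av_132_213_2341 n :
  #|Av n.+1 [:: [:: 1; 3; 2]; [:: 2; 1; 3]; [:: 2; 3; 4; 1]]| = (fib n.+3).-1.
Proof.
apply: (card_Av_fib (q := iota 0)).
- by move=> k.
- by move=> p; rewrite !inE => /or3P [] /eqP ->.
- by move=> p; rewrite !inE => /or3P [] /eqP ->.
- by move=> k _; rewrite -iota0S; exact: avoids_132_213_2341_special.
- move=> k s perm_s av; apply: decompose_132_213_2341 perm_s (av _ _) (av _ _) (av _ _).
  all: by rewrite !inE eqxx ?orbT.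
Qed.

Theorem theorem3p4 (n : nat) : (0 < n)%N ->
  #|Av n [:: [:: 1; 2; 3]; [:: 1; 3; 2]; [:: 3; 2; 4; 1]]| = (fib n.+2).-1 /\
  #|Av n [:: [:: 1; 3; 2]; [:: 2; 1; 3]; [:: 2; 3; 4; 1]]| = (fib n.+2).-1.
Proof.
case: n => // n _.
by split; [exact: card_Av_123_132_3241 | exact: card_Av_132_213_2341].
Qed.
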